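(* (1) Let $K\ge 2$ and $N\ge K+1$, and let $F\in\mathcal F_K\setminus\mathcal F_K^{\mathrm{in}}$. If $Q\in\mathcal Q_K^{\mathrm{an}}$ contains a column $Q_{\star i}$ with $Q_{ki}>0$ for all $k\in\{1,\dots,K\}$, then there is $Q^2\in\mathcal Q_K^{\mathrm{an}}$ such that $FQ=FQ^2$ but $(F,Q)\not\sim(F,Q^2)$. (2) Let $K\ge 2$, let $F\in\mathcal F_K^{\mathrm{in}}$ and $Q\in\mathcal Q_K$, and suppose there are a column index $k_0$ and $0<\delta<1/2$ with $\delta\le F_{sk_0}\le 1-\delta$ for all $s\in\{1,\dots,M\}$. Then there are $Q^2\in\mathcal Q_K\setminus\mathcal Q_K^{\mathrm{an}}$ and $F^2\in\mathcal F_K^{\mathrm{in}}$ such that $FQ=F^2Q^2$ but $(F,Q)\not\sim(F^2,Q^2)$. Moreover $Q^2$ can be chosen so that $\{k: e_k \text{ is a column of } Q^2\}=\{k: e_k\text{ is a column of }Q\}\setminus\{k_0\}$.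
   Context: Fix positive integers $M$ and $N$. For a positive integer $K$, $\mathcal F_K$ is the set of real $M\times K$ matrices with all entries in $[0,1]$, and $\mathcal Q_K$ is the set of real $K\times N$ matrices with entries in $[0,1]$ each of whose columns sums to $1$. $e_k$ denotes the $k$-th standard basis vector of $\mathbb R^K$, and $A_{\star j}$ denotes the $j$-th column of a matrix $A$. $\mathcal Q_K^{\mathrm{an}}$ is the set of $Q\in\mathcal Q_K$ such that for every $k\in\{1,\dots,K\}$ there is $i$ with $Q_{\star i}=e_k$. $\mathcal F_K^{\mathrm{in}}$ is the set of $F\in\mathcal F_K$ such that $F_{\star 1}-F_{\star K},\dots,F_{\star K-1}-F_{\star K}$ are linearly independent. $(F^1,Q^1)\sim(F^2,Q^2)$ means $F^1,F^2$ have the same number $K$ of columns and there is a permutation $\pi$ of $\{1,\dots,K\}$ with $F^2_{sk}=F^1_{s\pi(k)}$ and $Q^2_{ki}=Q^1_{\pi(k)i}$ for all $s,k,i$. *)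

From HB Require Import structures.
From mathcomp Require Import all_boot all_order all_algebra.
From mathcomp Require Import reals.
From mathcomp Require Import fingroup perm.
Set Implicit Arguments. Unset Strict Implicit. Unset Printing Implicit Defensive.
Import Order.TTheory GRing.Theory Num.Theory.
Local Open Scope ring_scope.

Section Defs.
Variable R : realType.

Definition e_vec (K : nat) (k : 'I_K) : 'cV[R]_K := delta_mx k (0 : 'I_1).

Definition inF (M K : nat) (F : 'M[R]_(M, K)) : Prop :=
  forall s k, 0 <= F s k <= 1.

Definition inQ (K N : nat) (Q : 'M[R]_(K, N)) : Prop :=
  (forall k i, 0 <= Q k i <= 1) /\ (forall i, \sum_(k < K) Q k i = 1).

Definition has_col_e (K N : nat) (Q : 'M[R]_(K, N)) (k : 'I_K) : Prop :=
  exists i : 'I_N, col i Q = e_vec k.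

Definition inQan (K N : nat) (Q : 'M[R]_(K, N)) : Prop :=
  inQ Q /\ forall k : 'I_K, has_col_e Q k.

(* F_K^in : F in F_K with F_{*1}-F_{*K}, ..., F_{*K-1}-F_{*K} linearly
   independent.  [j] is the last column index (value K-1). *)
Definition inFin (M K : nat) (F : 'M[R]_(M, K)) : Prop :=
  inF F /\
  forall j : 'I_K, val j = K.-1 ->
  forall c : 'I_K -> R,
    (forall s : 'I_M, \sum_(k < K | (val k < K.-1)%N) c k * (F s k - F s j) = 0) ->
    forall k : 'I_K, (val k < K.-1)%N -> c k = 0.

Definition equivFQ (M K N : nat) (F1 : 'M[R]_(M, K)) (Q1 : 'M[R]_(K, N))
  (F2 : 'M[R]_(M, K)) (Q2 : 'M[R]_(K, N)) : Prop :=
  exists pi : {perm 'I_K},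
    (forall s k, F2 s k = F1 s (pi k)) /\ (forall k i, Q2 k i = Q1 (pi k) i).

End Defs.

From HB Require Import structures.
From mathcomp Require Import all_boot all_order all_algebra.
From mathcomp Require Import reals.
From mathcomp Require Import fingroup perm.
From mathcomp Require Import zify ring lra.
From Stdlib Require Import Classical.
Set Implicit Arguments. Unset Strict Implicit. Unset Printing Implicit Defensive.
Import Order.TTheory GRing.Theory Num.Theory.
Local Open Scope ring_scope.

(* Both parts rest on two ways of changing a factorization [F *m Q] without
   changing the product: adding to [Q] a multiple of a vector [d] with
   [F *m d = 0] and [sum_k d_k = 0], or replacing [(F, Q)] by
   [(F *m A, B *m Q)] with [A *m B = 1], [A] preserving column sums.

   (1) Affine dependence of the columns of [F] provides such a [d <> 0].
   Adding [t d] to the strictly positive column of [Q], for [t > 0] small,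
   keeps [Q] in [Q_K^an]; the anchor columns are untouched, so a permutation
   relating the two factorizations must fix every component, hence the two
   [Q]'s would coincide.

   (2) With [g = delta / (1 - delta)], [A = 1 + g (e_k0 - e_j) e_k0^T] and
   [B = 1 - delta (e_k0 - e_j) e_k0^T] are inverse.  [B] moves the fraction
   [delta] of row [k0] of [Q] onto row [j], which destroys the anchor of [k0]
   and no other; [A] pushes column [k0] of [F] away from column [j], and the
   margin [delta] keeps it inside [0,1].  Affine independence is preserved
   by [A], and it also forbids the new column [k0] from being a column of
   [F], so the factorizations are not equivalent. *)

Lemma const1_mulmxE (R : pzSemiRingType) (p m n : nat) (A : 'M[R]_(m, n)) x i :
  (const_mx 1 *m A : 'M_(p, n)) x i = \sum_k A k i.
Proof. by rewrite mxE; apply: eq_bigr => k _; rewrite mxE mul1r. Qed.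

Lemma ler_add_sum2 (R : numDomainType) (I : finType) (f : I -> R) (a b : I) :
  a != b -> (forall i, 0 <= f i) -> f a + f b <= \sum_i f i.
Proof.
move=> ab f_ge0; rewrite (bigD1 a) //= (bigD1 b) 1?eq_sym //= addrA lerDl.
by apply: sumr_ge0 => i _.
Qed.

Lemma exists_small_scaling (R : realFieldType) (I : finType) (d b : I -> R) :
  (forall i, 0 < b i) -> exists2 t, 0 < t & forall i, `|t * d i| <= b i.
Proof.
move=> b_gt0; set S := \sum_i `|d i| / b i.
have S_ge0 : 0 <= S by apply: sumr_ge0 => i _; rewrite divr_ge0 // ltW.
have t_gt0 : 0 < (1 + S)^-1 by rewrite invr_gt0; lra.
exists (1 + S)^-1 => // i.
have le_S : `|d i| / b i <= S.
  rewrite /S (bigD1 i) //= lerDl; apply: sumr_ge0 => k _.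
  by rewrite divr_ge0 // ltW.
rewrite normrM gtr0_norm // mulrC ler_pdivrMr; last lra.
by move: le_S; rewrite ler_pdivrMr //; have := b_gt0 i; nra.
Qed.

Lemma exists_ord_neq (K : nat) : (1 < K)%N -> forall k : 'I_K, exists l, l != k.
Proof.
move=> hK k; have K0 : (0 < K)%N by lia.
case: (eqVneq k (Ordinal K0)) => [->|nk]; last by exists (Ordinal K0); rewrite eq_sym.
by exists (Ordinal hK).
Qed.

Section AffineIndependence.
Variables (R : fieldType) (M K : nat).
Implicit Types (F : 'M[R]_(M, K)) (v w : 'cV[R]_K).

Definition affine_free F :=
  forall v, const_mx 1 *m v = 0 :> 'M_1 -> F *m v = 0 -> v = 0.

Lemma affine_free_inj F v w : affine_free F ->
  const_mx 1 *m v = const_mx 1 *m w :> 'M_1 -> F *m v = F *m w -> v = w.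
Proof.
move=> hF e1 e2; apply/eqP; rewrite -subr_eq0; apply/eqP/hF.
  by rewrite mulmxBr e1 subrr.
by rewrite mulmxBr e2 subrr.
Qed.

Lemma affine_free_mulmx F (A B : 'M[R]_K) : affine_free F ->
  const_mx 1 *m A = const_mx 1 :> 'rV_K -> A *m B = 1%:M -> affine_free (F *m A).
Proof.
move=> hF hA hAB v v1 Fv.
have Av0 : A *m v = 0 by apply: hF; rewrite mulmxA ?hA.
by rewrite -[v]mul1mx -(mulmx1C hAB) -mulmxA Av0 mulmx0.
Qed.

Lemma not_affine_free F : ~ affine_free F ->
  exists v, [/\ const_mx 1 *m v = 0 :> 'M_1, F *m v = 0 & v != 0].
Proof.
move=> hF; apply: NNPP => hno; apply: hF => v v1 Fv.
by apply/eqP/negPn/negP => v0; apply: hno; exists v.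
Qed.

End AffineIndependence.

Section Transfer.
Variables (R : fieldType) (K : nat) (k0 j : 'I_K).
Hypothesis jk0 : j != k0.

Definition transfer_dir : 'cV[R]_K := delta_mx k0 0 - delta_mx j 0.

Definition transfer_mx (a : R) : 'M[R]_K :=
  1%:M + a *: (transfer_dir *m delta_mx 0 k0).

Lemma transfer_dirE k : transfer_dir k 0 = (k == k0)%:R - (k == j)%:R.
Proof. by rewrite !mxE !eqxx !andbT. Qed.

Lemma ones_transfer_dir : const_mx 1 *m transfer_dir = 0 :> 'M_1.
Proof. by rewrite mulmxBr -!colE !col_const subrr. Qed.

Lemma mul_delta_transfer_dir : delta_mx 0 k0 *m transfer_dir = 1%:M.
Proof.
rewrite mulmxBr mul_delta_mx mul_delta_mx_0 1?eq_sym // subr0.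
by apply/matrixP => x y; rewrite !ord1 !mxE.
Qed.

Lemma transfer_mxM a b : a + b + a * b = 0 ->
  transfer_mx a *m transfer_mx b = 1%:M.
Proof.
move=> hab; rewrite /transfer_mx; set P := transfer_dir *m _.
have PP : P *m P = P.
  by rewrite mulmxA -(mulmxA transfer_dir) mul_delta_transfer_dir mulmx1.
rewrite mulmxDl !mulmxDr !mul1mx mulmx1 -!scalemxAl -!scalemxAr PP scalerA.
by rewrite -!addrA -!scalerDl addrA [b + a]addrC hab scale0r addr0.
Qed.

Lemma ones_transfer_mx a : const_mx 1 *m transfer_mx a = const_mx 1 :> 'rV_K.
Proof.
by rewrite mulmxDr mulmx1 -scalemxAr mulmxA ones_transfer_dir mul0mx scaler0 addr0.
Qed.

Lemma transfer_mxE a k l :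
  transfer_mx a k l = (k == l)%:R + a * ((k == k0)%:R - (k == j)%:R) * (l == k0)%:R.
Proof. by rewrite !mxE big_ord1 transfer_dirE !mxE eqxx mulrA. Qed.

Lemma mul_transfer_mxE (N : nat) a (Q : 'M[R]_(K, N)) k i :
  (transfer_mx a *m Q) k i = Q k i + a * ((k == k0)%:R - (k == j)%:R) * Q k0 i.
Proof.
rewrite mulmxDl mul1mx -scalemxAl -mulmxA -rowE !mxE big_ord1 transfer_dirE mxE.
by rewrite mulrA.
Qed.

Lemma mulmx_transferE (M : nat) a (F : 'M[R]_(M, K)) s k :
  (F *m transfer_mx a) s k = F s k + a * (F s k0 - F s j) * (k == k0)%:R.
Proof.
rewrite mulmxDr mulmx1 -scalemxAr mulmxA mulmxBr -!colE !mxE big_ord1 !mxE eqxx.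
by rewrite mulrA.
Qed.

End Transfer.

Section Identifiability.
Variables (R : realType) (M K N : nat).
Implicit Types (F : 'M[R]_(M, K)) (Q : 'M[R]_(K, N)).

Lemma inQE Q : inQ Q <->
  (forall k i, 0 <= Q k i <= 1) /\ const_mx 1 *m Q = const_mx 1 :> 'rV_N.
Proof.
split=> -[Q01 Q1]; split=> //.
  by apply/matrixP => x i; rewrite const1_mulmxE Q1 mxE.
by move=> i; rewrite -(const1_mulmxE _ (0 : 'I_1)) Q1 mxE.
Qed.

Lemma inQ_add_le1 Q a b i : inQ Q -> a != b -> Q a i + Q b i <= 1.
Proof.
case=> Q01 Q1 ab; rewrite -(Q1 i).
by apply: ler_add_sum2 ab _ => k; case/andP: (Q01 k i).
Qed.

Lemma col_eq_e_vec Q i k : col i Q = e_vec R k <-> forall l, Q l i = (l == k)%:R.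
Proof.
split=> [hQ l|hQ]; last by apply/matrixP => l x; rewrite ord1 !mxE hQ eqxx andbT.
by have := congr1 (fun v : 'cV_K => v l 0) hQ; rewrite !mxE eqxx andbT.
Qed.

Lemma mulmx_col_eq0 F (v : 'cV[R]_K) :
  F *m v = 0 <-> forall s, \sum_k F s k * v k 0 = 0.
Proof.
split=> [Fv s|Fv]; last by apply/matrixP => s x; rewrite ord1 !mxE Fv.
by have := congr1 (fun w : 'cV_M => w s 0) Fv; rewrite !mxE.
Qed.

Section LastIndex.
Variable jl : 'I_K.
Hypothesis jl_last : val jl = K.-1.

Lemma split_last_sum (g : 'I_K -> R) :
  \sum_k g k = \sum_(k | (val k < K.-1)%N) g k + g jl.
Proof.
rewrite (bigID (fun k : 'I_K => (val k < K.-1)%N)) /=; congr (_ + _).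
apply: big_pred1 => k /=; rewrite -leqNgt.
apply/idP/eqP => [h|->]; last by rewrite jl_last.
by apply/val_inj; rewrite jl_last /=; move: (ltn_ord k); lia.
Qed.

Lemma sum_mul_sub_last (v f : 'I_K -> R) : \sum_k v k = 0 ->
  \sum_k v k * f k = \sum_(k | (val k < K.-1)%N) v k * (f k - f jl).
Proof.
move=> v0; rewrite !split_last_sum in v0 *; under [RHS]eq_bigr do rewrite mulrBr.
move/eqP: v0; rewrite sumrB -mulr_suml addr_eq0 => /eqP ->.
by rewrite mulNr opprK.
Qed.

Lemma affine_free_of_inFin F : inFin F -> affine_free F.
Proof.
move=> [_ hfree] v v1 /mulmx_col_eq0 Fv.
have {}v1 : \sum_k v k 0 = 0 by rewrite -(const1_mulmxE _ (0 : 'I_1)) v1 mxE.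
have vlt k : (val k < K.-1)%N -> v k 0 = 0.
  apply: (hfree jl jl_last (fun k => v k 0)) => s.
  rewrite -(sum_mul_sub_last _ v1) -[RHS](Fv s).
  by apply: eq_bigr => l _; rewrite mulrC.
apply/matrixP => k x; rewrite ord1 mxE; case: (ltnP k K.-1) => [/vlt //|hk].
have -> : k = jl by apply/val_inj; rewrite jl_last /=; move: (ltn_ord k); lia.
by move: v1; rewrite split_last_sum big1 ?add0r // => l /vlt.
Qed.

Lemma inFin_of_affine_free F : inF F -> affine_free F -> inFin F.
Proof.
move=> hF hfree; split=> // j' j'_last c hc k hk.
have ej : j' = jl by apply/val_inj; rewrite j'_last.
rewrite {j' j'_last}ej in hc.
pose v := \col_l (if (val l < K.-1)%N then c l else - \sum_(i | (val i < K.-1)%N) c i).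
have vE l : (val l < K.-1)%N -> v l 0 = c l by move=> hl; rewrite mxE hl.
have v1 : \sum_l v l 0 = 0.
  by rewrite split_last_sum mxE jl_last ltnn (eq_bigr _ vE) subrr.
have v0 : v = 0.
  apply: hfree; first by apply/matrixP => x y; rewrite const1_mulmxE (ord1 y) v1 mxE.
  apply/mulmx_col_eq0 => s; rewrite -[RHS](hc s) (eq_bigr _ (fun l _ => mulrC _ _)).
  by rewrite (sum_mul_sub_last _ v1); apply: eq_bigr => l hl; rewrite vE.
by rewrite -(vE k hk) v0 mxE.
Qed.

End LastIndex.

Lemma inFinE F : (0 < K)%N -> inFin F <-> inF F /\ affine_free F.
Proof.
rewrite -ltn_predL => lastK; have jl_last : val (Ordinal lastK) = K.-1 by [].
split=> [hFin|[hF hfree]].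
  by split; [case: hFin | apply: (affine_free_of_inFin jl_last)].
exact: (inFin_of_affine_free jl_last).
Qed.

Lemma perm_fixes_anchor (pi : {perm 'I_K}) Q Q2 k i :
  (forall k i, Q2 k i = Q (pi k) i) ->
  col i Q = e_vec R k -> col i Q2 = e_vec R k -> pi k = k.
Proof.
move=> hpi /col_eq_e_vec hQ /col_eq_e_vec hQ2.
move: (hQ2 k); rewrite hpi hQ eqxx; case: eqP => // _ /eqP.
by rewrite eq_sym oner_eq0.
Qed.

Lemma col_gt0_neq_e_vec Q i k : (1 < K)%N ->
  (forall l, 0 < Q l i) -> col i Q <> e_vec R k.
Proof.
move=> hK Q_gt0 /col_eq_e_vec hQ; have [l lk] := exists_ord_neq hK k.
by move: (Q_gt0 l); rewrite hQ (negbTE lk) ltxx.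
Qed.

Lemma anchored_nonidentifiable F Q i0 : (1 < K)%N ->
  inF F -> ~ inFin F -> inQan Q -> (forall k, 0 < Q k i0) ->
  exists Q2, inQan Q2 /\ F *m Q = F *m Q2 /\ ~ equivFQ F Q F Q2.
Proof.
move=> hK hF hnF [hQ hanch] Q_gt0; have /inQE[Q01 Q1] := hQ.
have [d [d1 Fd d0]] := not_affine_free (fun hfree =>
  hnF ((inFinE F (ltnW hK)).2 (conj hF hfree))).
have Q_lt1 k : Q k i0 < 1.
  have [l lk] := exists_ord_neq hK k.
  by have := inQ_add_le1 i0 hQ lk; have := Q_gt0 l; lra.
have min_gt0 k : 0 < Num.min (Q k i0) (1 - Q k i0).
  by rewrite lt_min Q_gt0 subr_gt0 Q_lt1.
have [t t_gt0 small] := exists_small_scaling (fun k => d k 0) min_gt0.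
pose Q2 := Q + (t *: d) *m delta_mx 0 i0.
have Q2E k i : Q2 k i = Q k i + t * d k 0 * (i == i0)%:R.
  by rewrite !mxE big_ord1 !mxE eqxx.
have anchor_Q2 k i : col i Q = e_vec R k -> col i Q2 = e_vec R k.
  move=> hi; have ii0 : i != i0 by apply/eqP => e; subst; exact: col_gt0_neq_e_vec hi.
  rewrite -hi; apply/matrixP => l x.
  by rewrite [LHS]mxE [RHS]mxE Q2E (negbTE ii0) mulr0 addr0.
exists Q2; split; [split | split].
- apply/inQE; split=> [k i|].
    rewrite Q2E; case: eqP => [->|_]; last by rewrite mulr0 addr0.
    move: (small k); rewrite mulr1 le_min !ler_norml.
    by case/andP=> /andP[? ?] /andP[? ?]; apply/andP; split; lra.
  by rewrite /Q2 mulmxDr Q1 -scalemxAl -scalemxAr mulmxA d1 mul0mx scaler0 addr0.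
- by move=> k; have [i hi] := hanch k; exists i; exact: anchor_Q2.
- by rewrite /Q2 mulmxDr -scalemxAl -scalemxAr mulmxA Fd mul0mx scaler0 addr0.
- move=> [pi [_ hpi]]; move/eqP: d0; apply; apply/matrixP => k x.
  have pik : pi k = k.
    by have [i hi] := hanch k; exact: perm_fixes_anchor hi (anchor_Q2 _ _ hi).
  move: (hpi k i0); rewrite pik Q2E eqxx mulr1 ord1 mxE => /eqP.
  by rewrite addrC -subr_eq0 addrK mulf_eq0 gt_eqF //= => /eqP.
Qed.

Lemma inQ_transfer Q k0 j delta : j != k0 -> 0 <= delta <= 1 ->
  inQ Q -> inQ (transfer_mx k0 j (- delta) *m Q).
Proof.
move=> jk0 /andP[d0 d1] hQ; have /inQE[Q01 Q1] := hQ; apply/inQE.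
split=> [k i|]; last by rewrite mulmxA ones_transfer_mx.
have /andP[q0 q1] := Q01 k0 i; rewrite mul_transfer_mxE.
case: (eqVneq k k0) => [->|_].
  by rewrite eq_sym (negbTE jk0) /= mulr1n subr0 mulr1; apply/andP; split; nra.
case: (eqVneq k j) => [->|_]; last by rewrite subrr !mulr0 mul0r addr0.
rewrite /= mulr1n sub0r; have := inQ_add_le1 i hQ jk0.
by have /andP[] := Q01 j i; move=> *; apply/andP; split; nra.
Qed.

Lemma has_col_e_transfer Q k0 j delta k : j != k0 -> 0 < delta < 1 -> inQ Q ->
  has_col_e (transfer_mx k0 j (- delta) *m Q) k <-> has_col_e Q k /\ k <> k0.
Proof.
move=> jk0 /andP[d0 d1] [Q01 _]; set Q2 := transfer_mx _ _ _ *m Q.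
have Q2k0 i : Q2 k0 i = (1 - delta) * Q k0 i.
  by rewrite mul_transfer_mxE eqxx eq_sym (negbTE jk0) /= mulr1n subr0; ring.
have col_Q2 i : Q k0 i = 0 -> col i Q2 = col i Q.
  move=> q0; apply/matrixP => l x.
  by rewrite [LHS]mxE [RHS]mxE mul_transfer_mxE q0 mulr0 addr0.
split=> [[i hi]|[[i hi] kk0]].
- have /andP[q0 q1] := Q01 k0 i.
  move/col_eq_e_vec: (hi) => /(_ k0); rewrite Q2k0.
  case: (eqVneq k0 k) => [_|nk] /= q; first by exfalso; nra.
  have {}q : Q k0 i = 0 by nra.
  by split=> [|ek]; [exists i; rewrite -col_Q2 | rewrite ek eqxx in nk].
- exists i; rewrite col_Q2 //; move/col_eq_e_vec: hi => ->.
  by rewrite eq_sym; move/eqP/negbTE: kk0 => ->.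
Qed.

Lemma inF_transfer F k0 j delta : 0 < delta < 1 -> inF F ->
  (forall s, delta <= F s k0 <= 1 - delta) ->
  inF (F *m transfer_mx k0 j (delta / (1 - delta))).
Proof.
move=> /andP[d0 d1] hF hk0 s k; rewrite mulmx_transferE.
case: eqP => [->|_]; last by rewrite mulr0 addr0.
have /andP[a1 a2] := hk0 s; have /andP[b1 b2] := hF s j.
have -> : F s k0 + delta / (1 - delta) * (F s k0 - F s j) * 1%:R =
          (F s k0 - delta * F s j) / (1 - delta).
  by field; rewrite subr_eq0 gt_eqF.
have dFj_le : delta * F s j <= delta by rewrite ler_piMr // ltW.
have dFj_ge0 : 0 <= delta * F s j by rewrite mulr_ge0 // ltW.
by rewrite divr_ge0 ?ler_pdivrMr ?subr_gt0 //; lra.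
Qed.

Lemma transfer_not_equivFQ F Q Q2 k0 j a : j != k0 -> 0 < a ->
  affine_free F -> ~ equivFQ F Q (F *m transfer_mx k0 j a) Q2.
Proof.
move=> jk0 a0 hfree [pi [hpi _]].
have : col k0 (transfer_mx k0 j a) = delta_mx (pi k0) 0.
  apply: (affine_free_inj hfree).
    by rewrite colE mulmxA ones_transfer_mx -!colE !col_const.
  rewrite colE mulmxA -!colE; apply/matrixP => s x.
  by rewrite [LHS]mxE [RHS]mxE hpi.
move/matrixP/(_ j 0); rewrite [LHS]mxE transfer_mxE mxE (negbTE jk0) !eqxx andbT.
by case: (j == pi k0) => /=; lra.
Qed.

Lemma unanchored_nonidentifiable F Q k0 delta : (1 < K)%N ->
  inFin F -> inQ Q -> 0 < delta < 1 -> (forall s, delta <= F s k0 <= 1 - delta) ->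
  exists Q2 F2, inQ Q2 /\ ~ inQan Q2 /\ inFin F2 /\ F *m Q = F2 *m Q2 /\
    ~ equivFQ F Q F2 Q2 /\ (forall k, has_col_e Q2 k <-> has_col_e Q k /\ k <> k0).
Proof.
move=> hK hFin hQ d01 hFk0; have /andP[d0 d1] := d01.
have [j jk0] := exists_ord_neq hK k0.
have [hF hfree] := (inFinE F (ltnW hK)).1 hFin.
pose g := delta / (1 - delta).
have g_gt0 : 0 < g by rewrite divr_gt0 // subr_gt0.
have g_inv : g + - delta + g * - delta = 0.
  by rewrite /g; field; rewrite subr_eq0 gt_eqF.
exists (transfer_mx k0 j (- delta) *m Q), (F *m transfer_mx k0 j g).
split; [|split; [|split; [|split; [|split]]]].
- by apply: inQ_transfer => //; rewrite !ltW.
- by case=> _ /(_ k0) /(has_col_e_transfer _ jk0 d01 hQ) [].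
- apply/inFinE; first exact: ltnW.
  split; first exact: inF_transfer.
  apply: (affine_free_mulmx (B := transfer_mx k0 j (- delta)) hfree).
  + exact: ones_transfer_mx.
  + exact: transfer_mxM.
- by rewrite mulmxA -(mulmxA F) transfer_mxM // mulmx1.
- exact: transfer_not_equivFQ.
- by move=> k; apply: has_col_e_transfer.
Qed.

End Identifiability.

Theorem mainTheorem2 (R : realType) (M N : nat) (hM : (0 < M)%N) (hN : (0 < N)%N) :
  (* part (1) *)
  (forall (K : nat) (F : 'M[R]_(M, K)) (Q : 'M[R]_(K, N)),
     (2 <= K)%N -> (K + 1 <= N)%N ->
     inF F -> ~ inFin F ->
     inQan Q -> (exists i : 'I_N, forall k : 'I_K, 0 < Q k i) ->
     exists Q2 : 'M[R]_(K, N),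
       inQan Q2 /\ F *m Q = F *m Q2 /\ ~ equivFQ F Q F Q2)
  /\
  (* part (2) *)
  (forall (K : nat) (F : 'M[R]_(M, K)) (Q : 'M[R]_(K, N)) (k0 : 'I_K) (delta : R),
     (2 <= K)%N ->
     inFin F -> inQ Q ->
     0 < delta -> delta < 1 / 2 ->
     (forall s : 'I_M, delta <= F s k0 <= 1 - delta) ->
     exists (Q2 : 'M[R]_(K, N)) (F2 : 'M[R]_(M, K)),
       inQ Q2 /\ ~ inQan Q2 /\ inFin F2 /\
       F *m Q = F2 *m Q2 /\ ~ equivFQ F Q F2 Q2 /\
       (forall k : 'I_K, has_col_e Q2 k <-> (has_col_e Q k /\ k <> k0))).
Proof.
split=> K F Q.
- move=> hK _ hF hnF hQ [i0 Q_gt0].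
  exact: anchored_nonidentifiable hK hF hnF hQ Q_gt0.
- move=> k0 delta hK hFin hQ d0 d12 hFk0.
  by apply: unanchored_nonidentifiable => //; apply/andP; split; lra.
Qed.
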